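(* Assume that the reward class $\mathcal F_{\mathcal P}$ is compact under $\|\cdot\|_{\infty,\mathrm{supp}(\pi_0)}$ and that, for every $R\in\mathcal F_{\mathcal P}$, the map $a\mapsto R(x,a)$ is continuous on $S_x$ for $d_0$-a.e. $x\in\mathcal X$. Then for every truth $p\in\mathcal P$ and every $R\in\mathcal F_{\mathcal P}$, \[ \mathcal L_p(R)=\mathcal L_p(R_p)\quad\Longrightarrow\quad R(x,a)=R_p(x,a)\qquad\forall a\in S_x,\quad d_0\text{-a.e. }x. \] In particular, $\mathcal G_p(R)=0$.
   Context: $\mathcal X$ is a context space with context distribution $d_0$; $\mathcal A$ is a separable metric action space; $\pi_0:\mathcal X\to\Delta(\mathcal A)$ is a reference policy and $S_x:=\mathrm{supp}(\pi_0(\cdot\mid x))$ is the topological support; $\|R\|_{\infty,\mathrm{supp}(\pi_0)}$ is the supremum of $|R(x,a)|$ over pairs with $a\in S_x$. $\mathcal P$ is a compact class of truths; each $p\in\mathcal P$ induces a $\pi_0$-centered measurable reward $R_p:\mathcal X\times\mathcal A\to\mathbb R$ (i.e. $\mathbb E_{a\sim\pi_0(\cdot\mid x)}[R_p(x,a)]=0$), and $\mathcal F_{\mathcal P}:=\{R_p:p\in\mathcal P\}$. For a slate $\mathbf a=(a_1,\dots,a_K)$, $K\ge2$, the MNL choice model is $P_R(y=k\mid x,\mathbf a)=e^{R(x,a_k)}/\sum_{\ell=1}^K e^{R(x,a_\ell)}$, and the log-loss is $\ell(\mathbf v,y)=\log\sum_{k=1}^K e^{v_k}-v_y$. The truth-centered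 population loss is $\mathcal L_p(R):=\mathbb E[\ell(\mathbf v_R,Y)]$ where $X\sim d_0$, $\mathbf A=(A_1,\dots,A_K)\sim\pi_0(\cdot\mid X)^{\otimes K}$, $Y\sim P_{R_p}(\cdot\mid X,\mathbf A)$, and $\mathbf v_R=(R(X,A_1),\dots,R(X,A_K))$. For a centered reward $R$, $a_R(x)$ is a measurable selector in $\arg\max_{a\in S_x}R(x,a)$ under a fixed common measurable tie-breaking rule, $a_p:=a_{R_p}$, and the temperature-zero regret is $\mathcal G_p(R):=\mathbb E_{X\sim d_0}[R_p(X,a_p(X))-R_p(X,a_R(X))]$. *)

From HB Require Import structures.
From mathcomp Require Import all_boot all_order all_algebra.
From mathcomp Require Import all_classical all_reals all_analysis.
Set Implicit Arguments. Unset Strict Implicit. Unset Printing Implicit Defensive.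
Import Order.TTheory GRing.Theory Num.Theory.
Local Open Scope classical_set_scope.
Local Open Scope ring_scope.

Section Defs.
Variable R : realType.

Section Metric.
Variable A : Type.
Variable dA : A -> A -> R.

Definition is_metric : Prop :=
  [/\ forall a, dA a a = 0,
      forall a b, dA a b = dA b a,
      forall a b c, dA a c <= dA a b + dA b c
    & forall a b, dA a b = 0 -> a = b].

Definition mopen (U : set A) : Prop :=
  forall a, U a -> exists2 e : R, 0 < e & forall b, dA a b < e -> U b.

Definition separable_metric : Prop :=
  exists D : set A, countable D /\
    forall a (e : R), 0 < e -> exists2 b, D b & dA a b < e.
End Metric.

Variables (dX : measure_display) (X : measurableType dX).
Variables (dA' : measure_display) (A : measurableType dA').

Definition borel_for (dA : A -> A -> R) : Prop :=
  (@measurable _ A) = <<s mopen dA >>.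

Definition supp (dA : A -> A -> R) (pi0 : X -> set A -> \bar R) (x : X)
  : set A :=
  [set a | forall U : set A, mopen dA U -> U a -> (0 < pi0 x U)%E].

Definition supnorm_supp (S : X -> set A) (Rf Rg : X -> A -> R) : \bar R :=
  ereal_sup [set r | exists x a, S x a /\ r = (`|Rf x a - Rg x a|)%:E].

(* F_P = {R_p | p in P} compact under ||.||_{infty,supp(pi0)}: every element
   has finite norm (F_P lies in the normed space), and F_P is sequentially
   compact (equivalent to compactness for a (pseudo)metric). *)
Definition compact_class (P : Type) (S : X -> set A) (Rof : P -> X -> A -> R)
  : Prop :=
  (forall p, (supnorm_supp S (Rof p) (fun _ _ => 0%R) < +oo)%E) /\
  forall u : nat -> P, exists (phi : nat -> nat) (q : P),
    {homo phi : m n / (m < n)%N >-> (m < n)%N} /\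
    ((fun n => supnorm_supp S (Rof (u (phi n))) (Rof q)) @ \oo --> 0%E).

Definition cont_on_supp (dA : A -> A -> R) (S : set A) (f : A -> R) : Prop :=
  forall a, S a -> forall e : R, 0 < e -> exists2 del : R, 0 < del &
    forall b, S b -> dA a b < del -> `|f a - f b| < e.

Definition mnl_prob (K : nat) (v : 'I_K -> R) (k : 'I_K) : R :=
  expR (v k) / \sum_(l < K) expR (v l).

Definition logloss (K : nat) (v : 'I_K -> R) (y : 'I_K) : R :=
  ln (\sum_(l < K) expR (v l)) - v y.

(* integral of f against the K-fold product mu^{(x)K}, written as an
   iterated integral (Tonelli) *)
Fixpoint prod_integral (mu : set A -> \bar R) (n : nat)
  : (n.-tuple A -> \bar R) -> \bar R :=
  match n return (n.-tuple A -> \bar R) -> \bar R with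
  | 0 => fun f => f [tuple]
  | n'.+1 => fun f =>
      (\int[mu]_a prod_integral mu (fun t : n'.-tuple A => f [tuple of a :: t]))%E
  end.

Definition slate_values (K : nat) (Rf : X -> A -> R) (x : X) (t : K.-tuple A)
  : 'I_K -> R := fun k => Rf x (tnth t k).

(* truth-centered population loss L_p(R) = E[ l(v_R, Y) ],
   X ~ d0, A ~ pi0(.|X)^{(x)K}, Y ~ P_{R_p}(.|X,A) *)
Definition pop_loss (K : nat) (d0 : set X -> \bar R) (pi0 : X -> set A -> \bar R)
  (Rp Rf : X -> A -> R) : \bar R :=
  (\int[d0]_x prod_integral (pi0 x) (fun t : K.-tuple A =>
     (\sum_(k < K) mnl_prob (slate_values Rp x t) k *
                   logloss (slate_values Rf x t) k)%:E))%E.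

Definition argmax_set (S : X -> set A) (Rf : X -> A -> R) (x : X) : set A :=
  [set a | S x a /\ forall b, S x b -> Rf x b <= Rf x a].

(* a_R(x) : selector with a fixed common tie-breaking rule [tie], which picks
   an element of a given argmax set *)
Definition a_sel (S : X -> set A) (tie : X -> set A -> A) (Rf : X -> A -> R)
  : X -> A := fun x => tie x (argmax_set S Rf x).

Definition regret (d0 : set X -> \bar R) (S : X -> set A) (tie : X -> set A -> A)
  (Rp Rf : X -> A -> R) : \bar R :=
  (\int[d0]_x (Rp x (a_sel S tie Rp x) - Rp x (a_sel S tie Rf x))%:E)%E.

End Defs.

Definition kfun (R : realType) (dX dA' : measure_display) (X : measurableType dX)
  (A : measurableType dA') (k : R.-pker X ~> A) : X -> set A -> \bar R :=
  fun x U => k x U.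

From HB Require Import structures.
From mathcomp Require Import all_boot all_order all_algebra.
From mathcomp Require Import all_classical all_reals all_analysis.
From mathcomp Require Import measurable_realfun.
From mathcomp Require Import ring lra.
Set Implicit Arguments.
Unset Strict Implicit.
Unset Printing Implicit Defensive.

Import Order.TTheory GRing.Theory Num.Theory.
Local Open Scope classical_set_scope.
Local Open Scope ring_scope.

(* For a fixed slate, the expected log-loss of v_q under the MNL law of v_p
   exceeds that of v_p by a Kullback-Leibler divergence, which vanishes only
   when v_q - v_p is constant along the slate.  Equal population losses make
   this excess vanish for almost every slate; since a slate has at least two
   actions, R_q - R_p is then pi0(.|x)-almost surely a constant, which is 0
   because both rewards are centred.  Every open neighbourhood of a point of
   S_x has positive mass, so continuity extends the equality to all of S_x.
   Then R_q and R_p have the same argmax set on S_x and the regret vanishes. *)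

Section mnl_cross_entropy.
Context (R : realType) (K : nat).
Implicit Types v vp vq : 'I_K -> R.

Definition mnl_partition v : R := \sum_(l < K) expR (v l).

Definition cross_logloss vp vq : R := \sum_(k < K) mnl_prob vp k * logloss vq k.

Lemma mnl_partition_gt0 v (k0 : 'I_K) : 0 < mnl_partition v.
Proof.
rewrite /mnl_partition (bigD1 k0) //= ltr_pwDl ?expR_gt0 //.
by apply: sumr_ge0 => i _; exact: expR_ge0.
Qed.

Lemma mnl_probE v k : mnl_prob v k = expR (v k - ln (mnl_partition v)).
Proof. by rewrite expRD expRN lnK // posrE (mnl_partition_gt0 _ k). Qed.

Lemma cross_loglossE vp vq (k0 : 'I_K) : cross_logloss vp vq =
  ln (mnl_partition vq) - (\sum_(k < K) expR (vp k) * vq k) / mnl_partition vp.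
Proof.
have Zp_neq0 : mnl_partition vp != 0.
  by rewrite gt_eqF // (mnl_partition_gt0 _ k0).
rewrite /cross_logloss /mnl_prob /logloss -/(mnl_partition vp) -/(mnl_partition vq).
transitivity ((\sum_(k < K) (expR (vp k) * ln (mnl_partition vq) - expR (vp k) * vq k))
              / mnl_partition vp).
  by rewrite mulr_suml; apply: eq_bigr => k _; ring.
by rewrite sumrB -mulr_suml -/(mnl_partition vp); field.
Qed.

Section gibbs.
Variables (vp vq : 'I_K -> R) (k0 : 'I_K).

Let Zp := mnl_partition vp.
Let Zp_gt0 : 0 < Zp := mnl_partition_gt0 vp k0.
Let shift k := vq k - vp k.
(* [mean] is the mean of [shift] under the MNL law of [vp]; each [gap_term] is
   nonnegative and vanishes only where [shift k = mean], as e^u >= 1 + u with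
   equality only at u = 0. *)
Let mean := (\sum_(l < K) expR (vp l) * shift l) / Zp.
Let gap_term k := expR (vp k) * (expR (shift k - mean) - 1 - (shift k - mean)).
Let gap := \sum_(k < K) gap_term k.

Let gap_term_ge0 k : 0 <= gap_term k.
Proof.
by rewrite mulr_ge0 ?expR_ge0 //; have := expR_ge1Dx (shift k - mean); lra.
Qed.

Let gap_ge0 : 0 <= gap.
Proof. by apply: sumr_ge0 => k _; exact: gap_term_ge0. Qed.

Let partition_vq : mnl_partition vq = expR mean * (Zp + gap).
Proof.
have -> : Zp + gap = \sum_(k < K) expR (vp k) * expR (shift k - mean).
  rewrite /gap /gap_term /Zp /mnl_partition -big_split /=.
  rewrite (eq_bigr (fun k => expR (vp k) * expR (shift k - mean) +
      (mean * expR (vp k) - expR (vp k) * shift k))); last by move=> k _; ring.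
  rewrite big_split /= sumrB -mulr_sumr -/(mnl_partition vp) -/Zp.
  by rewrite [X in _ + (_ - X)](_ : _ = mean * Zp) ?subrr ?addr0 // /mean; field;
    rewrite gt_eqF.
rewrite mulr_sumr /mnl_partition; apply: eq_bigr => k _.
by rewrite mulrCA -!expRD /shift; congr expR; ring.
Qed.

Lemma cross_logloss_excessE :
  cross_logloss vp vq - cross_logloss vp vp = ln (Zp + gap) - ln Zp.
Proof.
have Zgap_gt0 : 0 < Zp + gap by rewrite ltr_wpDr.
rewrite !(cross_loglossE _ _ k0) partition_vq lnM ?posrE ?expR_gt0 // expRK.
rewrite -/Zp /mean /shift.
rewrite (eq_bigr (fun l => expR (vp l) * vq l - expR (vp l) * vp l)) ?sumrB;
  last by move=> l _; rewrite mulrBr.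
by field; exact: lt0r_neq0.
Qed.

Lemma cross_logloss_excess_ge0 : 0 <= cross_logloss vp vq - cross_logloss vp vp.
Proof. by rewrite cross_logloss_excessE subr_ge0 ler_ln ?posrE ?lerDl ?ltr_wpDr. Qed.

Lemma cross_logloss_excess_eq0 :
  cross_logloss vp vq = cross_logloss vp vp -> forall k l, vq k - vp k = vq l - vp l.
Proof.
move=> eq_loss.
have /eqP : gap = 0.
  suff : Zp + gap = Zp by lra.
  apply: ln_inj; rewrite ?posrE ?ltr_wpDr //.
  by apply/eqP; rewrite -subr_eq0 -cross_logloss_excessE eq_loss subrr.
rewrite psumr_eq0; last by move=> k _; exact: gap_term_ge0.
move=> /allP gap0.
suff shift_mean k : shift k = mean.
  by move=> k l; rewrite -/(shift k) -/(shift l) !shift_mean.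
move: (gap0 k (mem_index_enum k)).
rewrite /gap_term mulf_eq0 gt_eqF ?expR_gt0 //= => /eqP gap_k0.
have [u0|u_neq0] := eqVneq (shift k - mean) 0.
  by apply/eqP; rewrite -subr_eq0 u0.
by have := expR_gt1Dx u_neq0; lra.
Qed.

End gibbs.

Lemma cross_logloss_self_ge0 vp : 0 <= cross_logloss vp vp.
Proof.
apply: sumr_ge0 => k _; have Zp_gt0 := mnl_partition_gt0 vp k.
apply: mulr_ge0; first by rewrite /mnl_prob divr_ge0 ?expR_ge0 ?ltW.
rewrite /logloss subr_ge0 -[X in X <= _]expRK ler_ln ?posrE ?expR_gt0 //.
by rewrite /mnl_partition (bigD1 k) //= lerDl sumr_ge0 // => *; exact: expR_ge0.
Qed.

(* Each summand is [p ln (1/p) <= 1 - p] with [p] the MNL probability. *)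
Lemma cross_logloss_self_le vp : cross_logloss vp vp <= K%:R.
Proof.
rewrite /cross_logloss -[K in K%:R]card_ord -sumr_const; apply: ler_sum => k _.
have Zp_gt0 := mnl_partition_gt0 vp k.
rewrite /mnl_prob /logloss -/(mnl_partition vp).
set x := mnl_partition vp * expR (- vp k).
have x_gt0 : 0 < x by rewrite mulr_gt0 ?expR_gt0.
have -> : ln (mnl_partition vp) - vp k = ln x by rewrite lnM ?posrE ?expR_gt0 // expRK.
have ln_le : ln x <= x - 1.
  by have := @le_ln1Dx _ (x - 1); rewrite [1 + _]addrC subrK; apply; lra.
apply: le_trans (ler_wpM2l (divr_ge0 (expR_ge0 _) (ltW Zp_gt0)) ln_le) _.
rewrite /x expRN [X in X <= _](_ : _ = 1 - expR (vp k) / mnl_partition vp); last first.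
  by field; rewrite ?gt_eqF ?expR_gt0.
by rewrite lerBlDr lerDl divr_ge0 ?expR_ge0 ?ltW.
Qed.

End mnl_cross_entropy.

Lemma ge0_integral_eq0_ae (R : realType) d (T : measurableType d)
    (mu : {measure set T -> \bar R}) (phi : T -> \bar R) :
  (forall t, (0 <= phi t)%E) -> measurable_fun setT phi ->
  (\int[mu]_t phi t = 0)%E -> {ae mu, forall t, phi t = 0%E}.
Proof.
move=> phi_ge0 phi_meas int_phi0.
have : (\int[mu]_(t in setT) `|phi t| = 0)%E.
  by rewrite -int_phi0; apply: eq_integral => t _; rewrite gee0_abs.
by move/(ae_eq_integral_abs mu measurableT phi_meas); apply: filterS => t /(_ I).
Qed.

Lemma ae_eq_of_shift_integral (R : realType) d (T : measurableType d)
    (mu : {measure set T -> \bar R}) (f g : T -> R) (c : R) :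
  mu setT = 1%E ->
  mu.-integrable setT (fun t => (f t)%:E) -> mu.-integrable setT (fun t => (g t)%:E) ->
  (\int[mu]_t (f t)%:E = \int[mu]_t (g t)%:E)%E ->
  {ae mu, forall t, f t - g t = c} -> {ae mu, forall t, f t = g t}.
Proof.
move=> mu1 f_int g_int int_eq shift.
suff c0 : c = 0.
  by apply: filterS shift => t; rewrite c0 => /eqP; rewrite subr_eq0 => /eqP.
have mfg : measurable_fun setT (fun t => (f t)%:E - (g t)%:E)%E.
  by apply: emeasurable_funB; [exact: measurable_int _ f_int|
                               exact: measurable_int _ g_int].
have : (\int[mu]_t ((f t)%:E - (g t)%:E) = c%:E)%E.
  rewrite (ae_eq_integral (cst c%:E)) //; last first.
    by apply: filterS shift => t fgt _; rewrite -EFinB fgt.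
  by rewrite integral_cst // mu1 mule1.
rewrite integralB_EFin // int_eq subee; last exact: integrable_fin_num.
by case.
Qed.

Lemma negligible_bigcup_countable (R : realType) d (T : measurableType d)
    (mu : {measure set T -> \bar R}) I (D : set I) (F : I -> set T) :
  countable D -> (forall i, D i -> mu.-negligible (F i)) ->
  mu.-negligible (\bigcup_(i in D) F i).
Proof.
move=> /countable_injP[g g_inj] F_negl.
pose G n := \bigcup_(i in [set i | D i /\ g i = n]) F i.
apply: (@negligibleS _ _ _ mu (\bigcup_n G n)).
  by move=> t [i Di Fit]; exists (g i) => //; exists i.
apply: negligible_bigcup => n.
have [[i0 [Di0 gi0]]|no_index] := pselect (exists i, D i /\ g i = n).
  apply: negligibleS (F_negl i0 Di0) => t [i [Di gi] Fit].
  by rewrite -(g_inj i i0) ?inE // gi gi0.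
suff -> : G n = set0 by exact: negligible_set0.
by apply/seteqP; split => // t [i Di _]; apply: no_index; exists i.
Qed.

Section metric_support.
Context (R : realType) (dA' : measure_display) (A : measurableType dA').
Variable dA : A -> A -> R.
Hypotheses (dA_metric : is_metric dA) (dA_separable : separable_metric dA)
  (dA_borel : borel_for dA).

Local Notation support mu :=
  [set a | forall U, mopen dA U -> U a -> (0 < mu U)%E].

Definition dball (c : A) (r : R) : set A := [set b | dA c b < r].

Lemma mopen_dball c r : mopen dA (dball c r).
Proof.
have [_ _ dA_tri _] := dA_metric.
move=> b /= cb; exists (r - dA c b); first by rewrite subr_gt0.
by move=> b' bb'; rewrite /dball /=; have := dA_tri c b b'; lra.
Qed.

Lemma measurable_mopen U : mopen dA U -> measurable U.
Proof. by move=> U_open; rewrite dA_borel; exact: sub_sigma_algebra. Qed.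

Lemma measurable_dball c r : measurable (dball c r).
Proof. exact/measurable_mopen/mopen_dball. Qed.

Lemma ae_support (mu : {measure set A -> \bar R}) : {ae mu, forall a, support mu a}.
Proof.
have [_ dA_sym dA_tri _] := dA_metric.
have [D [D_countable D_dense]] := dA_separable.
pose r m : R := m.+1%:R^-1.
have r_gt0 m : 0 < r m by rewrite invr_gt0.
pose Z := [set cm : A * nat | D cm.1 /\ mu (dball cm.1 (r cm.2)) = 0%E].
apply: (@negligibleS _ _ _ mu (\bigcup_(cm in Z) dball cm.1 (r cm.2))); last first.
  apply: negligible_bigcup_countable => [|[c m] [_ null_ball]].
    apply: sub_countable (countableX D_countable (countableP [set: nat])).
    by apply: subset_card_le => -[c m] [Dc _].
  by exists (dball c (r m)); split => //; exact: measurable_dball.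
move=> a /= not_support.
have [U [U_open Ua U_null]] : exists U, [/\ mopen dA U, U a & mu U = 0%E].
  apply: contra_notP not_support => no_null U U_open Ua.
  rewrite lt0e measure_ge0 andbT; apply/eqP => U_null.
  by apply: no_null; exists U.
have [e e_gt0 ball_U] := U_open a Ua.
have [m rm_lt] := ltr_add_invr (divr_gt0 e_gt0 (ltr0Sn _ 1)).
rewrite add0r -/(r m) in rm_lt.
have [c Dc ac_lt] := D_dense a (r m) (r_gt0 m).
have ball_sub : dball c (r m) `<=` U.
  move=> b /= cb; apply: ball_U; have := dA_tri a c b.
  by move: (r m) rm_lt ac_lt cb => q; rewrite /dball /=; lra.
exists (c, m) => /=; last by rewrite /dball /= dA_sym.
split => //; apply/eqP; rewrite -measure_le0 -U_null.
by apply: le_measure; rewrite ?inE //;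
  [exact: measurable_dball|exact: measurable_mopen].
Qed.

Lemma support_meets_ae (mu : {measure set A -> \bar R}) (P : A -> Prop) z r :
  support mu z -> 0 < r -> {ae mu, forall a, P a} -> exists2 b, dA z b < r & P b.
Proof.
have [dA_refl _ _ _] := dA_metric.
move=> z_support r_gt0 [N [mN N_null notP_N]].
have ball_pos : (0 < mu (dball z r))%E.
  by apply: z_support; [exact: mopen_dball|rewrite /dball /= dA_refl].
apply: contrapT => no_b.
suff : (mu (dball z r) <= 0)%E by rewrite leNgt ball_pos.
rewrite -N_null; apply: le_measure; rewrite ?inE //; first exact: measurable_dball.
by move=> b zb; apply: notP_N => Pb; apply: no_b; exists b.
Qed.

Lemma eq_on_support (mu : {measure set A -> \bar R}) (f g : A -> R) :
  cont_on_supp dA (support mu) f -> cont_on_supp dA (support mu) g ->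
  {ae mu, forall a, f a = g a} -> forall a, support mu a -> f a = g a.
Proof.
move=> f_cont g_cont fg_ae z z_support; apply/eqP; rewrite -subr_eq0 -normr_le0.
apply/ler_addgt0Pr => e e_gt0; rewrite add0r.
have e2_gt0 : 0 < e / 2 by rewrite divr_gt0.
have [df df_gt0 f_near] := f_cont z z_support _ e2_gt0.
have [dg dg_gt0 g_near] := g_cont z z_support _ e2_gt0.
have d_gt0 : 0 < Num.min df dg by rewrite lt_min df_gt0.
have [b zb [b_support fgb]] :=
  support_meets_ae z_support d_gt0 (filterI (ae_support mu) fg_ae).
move: zb; rewrite lt_min => /andP[zb_f zb_g].
have := f_near b b_support zb_f; have := g_near b b_support zb_g.
have := ler_normB (f z - f b) (g z - g b); rewrite fgb.
by rewrite (_ : _ - _ - _ = f z - g z); [lra|ring].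
Qed.

End metric_support.

Section kernel_pullback.
Context (R : realType) (dX : measure_display) (X : measurableType dX).
Context (dA' : measure_display) (A : measurableType dA').
Context (dY : measure_display) (Y : measurableType dY).
Variables (k : R.-pker X ~> A) (f : Y -> X).

Definition kpullback (mf : measurable_fun setT f) (y : Y) : {measure set A -> \bar R} :=
  k (f y).

Hypothesis mf : measurable_fun setT f.

Let measurable_kpullback U : measurable U -> measurable_fun setT (kpullback mf ^~ U).
Proof. by move=> mU; exact: measurableT_comp (measurable_kernel k U mU) mf. Qed.

HB.instance Definition _ :=
  isKernel.Build _ _ _ _ _ (kpullback mf) measurable_kpullback.

Let kpullback_prob y : kpullback mf y setT = 1%E.
Proof. exact: prob_kernel. Qed.

HB.instance Definition _ :=
  Kernel_isProbability.Build _ _ _ _ _ (kpullback mf) kpullback_prob.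

End kernel_pullback.

Section tuple_measurable.
Context (R : realType) (dA' : measure_display) (A : measurableType dA').

(* [(y, a_1, ..., a_n) |-> h y [:: a_1; ...; a_n]] is measurable; since
   [n.-tuple A] carries no sigma-algebra, the coordinates are moved one by one
   into the parameter space. *)
Fixpoint tuple_measurable n :
    forall dY (Y : measurableType dY), (Y -> n.-tuple A -> R) -> Prop :=
  match n with
  | 0 => fun dY Y h => measurable_fun setT (fun y => h y [tuple])
  | n'.+1 => fun dY Y h =>
      @tuple_measurable n' _ (Y * A)%type (fun ya t => h ya.1 [tuple of ya.2 :: t])
  end.

Lemma eq_tuple_measurable n dY (Y : measurableType dY) h1 (h2 : Y -> n.-tuple A -> R) :
  tuple_measurable h1 -> (forall y t, h1 y t = h2 y t) -> tuple_measurable h2.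
Proof. by move=> + h12; have -> // : h2 = h1 by apply/funext => y; apply/funext. Qed.

Lemma tuple_measurable_cst n dY (Y : measurableType dY) (c : Y -> R) :
  measurable_fun setT c -> tuple_measurable (fun y (_ : n.-tuple A) => c y).
Proof.
elim: n dY Y c => [//|n IH] dY Y c mc.
exact: IH (measurableT_comp mc measurable_fst).
Qed.

Lemma tuple_measurable_comp (phi : R -> R) n dY (Y : measurableType dY)
    (h : Y -> n.-tuple A -> R) :
  measurable_fun setT phi -> tuple_measurable h ->
  tuple_measurable (fun y t => phi (h y t)).
Proof.
move=> mphi; elim: n dY Y h => [|n IH] dY Y h /=; first exact: measurableT_comp.
exact: IH.
Qed.

Lemma tuple_measurable_comp2 (op : R -> R -> R) n dY (Y : measurableType dY)
    (h1 h2 : Y -> n.-tuple A -> R) :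
  measurable_fun setT (fun z : R * R => op z.1 z.2) ->
  tuple_measurable h1 -> tuple_measurable h2 ->
  tuple_measurable (fun y t => op (h1 y t) (h2 y t)).
Proof.
move=> mop; elim: n dY Y h1 h2 => [|n IH] dY Y h1 h2 /=; last exact: IH.
by move=> mh1 mh2; exact: measurableT_comp mop (measurable_fun_pair mh1 mh2).
Qed.

Lemma tuple_measurableD n dY (Y : measurableType dY) (h1 h2 : Y -> n.-tuple A -> R) :
  tuple_measurable h1 -> tuple_measurable h2 ->
  tuple_measurable (fun y t => h1 y t + h2 y t).
Proof. by apply: (tuple_measurable_comp2 (op := +%R)); exact: measurable_funD. Qed.

Lemma tuple_measurableB n dY (Y : measurableType dY) (h1 h2 : Y -> n.-tuple A -> R) :
  tuple_measurable h1 -> tuple_measurable h2 ->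
  tuple_measurable (fun y t => h1 y t - h2 y t).
Proof.
by apply: (tuple_measurable_comp2 (op := fun x y => x - y)); exact: measurable_funB.
Qed.

Lemma tuple_measurableM n dY (Y : measurableType dY) (h1 h2 : Y -> n.-tuple A -> R) :
  tuple_measurable h1 -> tuple_measurable h2 ->
  tuple_measurable (fun y t => h1 y t * h2 y t).
Proof. by apply: (tuple_measurable_comp2 (op := *%R)); exact: measurable_funM. Qed.

Lemma tuple_measurable_sum n dY (Y : measurableType dY) I (s : seq I)
    (F : I -> Y -> n.-tuple A -> R) :
  (forall i, tuple_measurable (F i)) ->
  tuple_measurable (fun y t => \sum_(i <- s) F i y t).
Proof.
move=> mF; elim: s => [|i s IH].
  apply: (eq_tuple_measurable (tuple_measurable_cst n (measurable_cst (0 : R)))).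
  by move=> y t; rewrite big_nil.
apply: (eq_tuple_measurable (tuple_measurableD (mF i) IH)) => y t.
by rewrite big_cons.
Qed.

Lemma tuple_measurable_tnth n dY (Y : measurableType dY) (w : Y * A -> R) (k : 'I_n) :
  measurable_fun setT w -> tuple_measurable (fun y t => w (y, tnth t k)).
Proof.
elim: n dY Y w k => [|n IH] dY Y w k mw; first by case: k.
case: k => -[|k] k_lt /=.
  apply: (eq_tuple_measurable (tuple_measurable_cst n mw)) => -[y a] t.
  by rewrite /= (tnth_nth a).
have mw' : measurable_fun setT (fun p : Y * A * A => w (p.1.1, p.2)).
  apply: measurableT_comp mw (measurable_fun_pair _ measurable_snd).
  exact: measurableT_comp measurable_fst measurable_fst.
apply: (eq_tuple_measurable (IH _ _ _ (Ordinal (k_lt : (k < n)%N)) mw')) => -[y a] t.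
by rewrite /= (tnth_nth a) (tnth_nth a).
Qed.

End tuple_measurable.

Section prod_integral.
Context (R : realType) (dA' : measure_display) (A : measurableType dA').

Local Notation kfst k := (kpullback k measurable_fst).

Lemma prod_integral_ge0 (mu : {measure set A -> \bar R}) n (g : n.-tuple A -> \bar R) :
  (forall t, (0 <= g t)%E) -> (0 <= prod_integral mu g)%E.
Proof.
elim: n g => [|n IH] g g_ge0 /=; first exact: g_ge0.
by apply: integral_ge0 => a _; apply: IH => t; exact: g_ge0.
Qed.

Lemma prod_integral_EFin_ge0 (mu : {measure set A -> \bar R}) n (g : n.-tuple A -> R) :
  (forall t, 0 <= g t) -> (0 <= prod_integral mu (fun t => (g t)%:E))%E.
Proof. by move=> g_ge0; apply: prod_integral_ge0 => t; rewrite lee_fin. Qed.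

Lemma measurable_prod_integral n dY (Y : measurableType dY) (k : R.-pker Y ~> A)
    (h : Y -> n.-tuple A -> R) :
  (forall y t, 0 <= h y t) -> tuple_measurable h ->
  measurable_fun setT (fun y => prod_integral (k y) (fun t => (h y t)%:E)).
Proof.
elim: n dY Y k h => [|n IH] dY Y k h h_ge0 mh /=; first exact/measurable_EFinP.
have := IH _ _ (kfst k) _ (fun ya t => h_ge0 ya.1 _) mh.
move/(measurable_fun_integral_finite_kernel _ k); apply => ya.
exact: prod_integral_EFin_ge0.
Qed.

Lemma prod_integralD n dY (Y : measurableType dY) (k : R.-pker Y ~> A)
    (h1 h2 : Y -> n.-tuple A -> R) :
  (forall y t, 0 <= h1 y t) -> (forall y t, 0 <= h2 y t) ->
  tuple_measurable h1 -> tuple_measurable h2 -> forall y,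
  prod_integral (k y) (fun t => (h1 y t + h2 y t)%:E) =
  (prod_integral (k y) (fun t => (h1 y t)%:E) +
   prod_integral (k y) (fun t => (h2 y t)%:E))%E.
Proof.
elim: n dY Y k h1 h2 => [//|n IH] dY Y k h1 h2 h1_ge0 h2_ge0 mh1 mh2 y /=.
rewrite -ge0_integralD //.
- apply: eq_integral => a _.
  exact: (IH _ _ (kfst k) _ _ (fun ya t => h1_ge0 ya.1 _)
    (fun ya t => h2_ge0 ya.1 _) mh1 mh2 (y, a)).
- by move=> a _; exact: prod_integral_EFin_ge0.
- exact: measurable_fun_pair2 y
    (measurable_prod_integral (kfst k) (fun ya t => h1_ge0 ya.1 _) mh1).
- by move=> a _; exact: prod_integral_EFin_ge0.
- exact: measurable_fun_pair2 y
    (measurable_prod_integral (kfst k) (fun ya t => h2_ge0 ya.1 _) mh2).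
Qed.

Lemma prod_integral_le n (c : R) dY (Y : measurableType dY) (k : R.-pker Y ~> A)
    (h : Y -> n.-tuple A -> R) :
  (forall y t, 0 <= h y t) -> (forall y t, h y t <= c) -> tuple_measurable h ->
  forall y, (prod_integral (k y) (fun t => (h y t)%:E) <= c%:E)%E.
Proof.
elim: n dY Y k h => [|n IH] dY Y k h h_ge0 h_le mh y /=; first by rewrite lee_fin.
apply: (@le_trans _ _ (\int[k y]_a cst c%:E a)%E).
  apply: ge0_le_integral => //.
  - by move=> a _; exact: prod_integral_EFin_ge0.
  - exact: measurable_fun_pair2 y
      (measurable_prod_integral (kfst k) (fun ya t => h_ge0 ya.1 _) mh).
  - move=> a _.
    exact: (IH _ _ (kfst k) _ (fun ya t => h_ge0 ya.1 _)
      (fun ya t => h_le ya.1 _) mh (y, a)).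
by rewrite integral_cst // prob_kernel mule1.
Qed.

Lemma prod_integral_eq0_ae n dY (Y : measurableType dY) (k : R.-pker Y ~> A)
    (h : Y -> n.+1.-tuple A -> R) :
  (forall y t, 0 <= h y t) -> tuple_measurable h -> forall y,
  prod_integral (k y) (fun t => (h y t)%:E) = 0%E ->
  {ae k y, forall a, prod_integral (k y) (fun t => (h y [tuple of a :: t])%:E) = 0%E}.
Proof.
move=> h_ge0 mh y; apply: ge0_integral_eq0_ae => [a|].
  exact: prod_integral_EFin_ge0.
exact: measurable_fun_pair2 y
  (measurable_prod_integral (kfst k) (fun ya t => h_ge0 ya.1 _) mh).
Qed.

Lemma ae_pker_proper dY (Y : measurableType dY) (k : R.-pker Y ~> A) y :
  ProperFilter (almost_everywhere (k y)).
Proof. by apply: ae_properfilter_algebraOfSetsType; rewrite prob_kernel lte01. Qed.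

Lemma prod_integral_eq0 n dY (Y : measurableType dY) (k : R.-pker Y ~> A)
    (h : Y -> n.-tuple A -> R) :
  (forall y t, 0 <= h y t) -> tuple_measurable h -> forall y,
  prod_integral (k y) (fun t => (h y t)%:E) = 0%E -> exists t, h y t = 0.
Proof.
elim: n dY Y k h => [|n IH] dY Y k h h_ge0 mh y; first by move=> [h0]; exists [tuple].
move=> /(prod_integral_eq0_ae h_ge0 mh) inner0.
have [a inner_a0] := @filter_ex _ _ (ae_pker_proper k y) _ inner0.
have [t ht] := IH _ _ (kfst k) _ (fun ya t => h_ge0 ya.1 _) mh (y, a) inner_a0.
by exists [tuple of a :: t].
Qed.

Lemma prod_integral_eq0_pair n dY (Y : measurableType dY) (k : R.-pker Y ~> A)
    (h : Y -> n.+2.-tuple A -> R) :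
  (forall y t, 0 <= h y t) -> tuple_measurable h -> forall y,
  prod_integral (k y) (fun t => (h y t)%:E) = 0%E ->
  exists a1 : A, {ae k y, forall a2 : A,
    exists t : n.-tuple A, h y [tuple of a1 :: [tuple of a2 :: t]] = 0}.
Proof.
move=> h_ge0 mh y /(prod_integral_eq0_ae h_ge0 mh) inner0.
have [a1 inner_a1] := @filter_ex _ _ (ae_pker_proper k y) _ inner0.
exists a1.
have kfst_ge0 (ya : Y * A) (t : n.+1.-tuple A) : 0 <= h ya.1 [tuple of ya.2 :: t] by [].
have := @prod_integral_eq0_ae _ _ _ (kfst k) _ kfst_ge0 mh (y, a1) inner_a1.
apply: filterS => a2.
exact: (@prod_integral_eq0 _ _ _ (kfst (kfst k))
  (fun yaa t => h yaa.1.1 [tuple of yaa.1.2 :: [tuple of yaa.2 :: t]])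
  (fun yaa t => h_ge0 yaa.1.1 _) mh ((y, a1), a2)).
Qed.

End prod_integral.

Section population_loss.
Context (R : realType) (dX : measure_display) (X : measurableType dX).
Context (dA' : measure_display) (A : measurableType dA').
Variables (d0 : probability X R) (pi0 : R.-pker X ~> A).

Local Notation measurable_reward Rf :=
  (measurable_fun setT (fun xa : X * A => Rf xa.1 xa.2)).

Lemma tuple_measurable_cross_logloss K (Rp Rq : X -> A -> R) :
  measurable_reward Rp -> measurable_reward Rq ->
  tuple_measurable (fun x (t : K.-tuple A) =>
    cross_logloss (slate_values Rp x t) (slate_values Rq x t)).
Proof.
move=> mRp mRq.
have mslate (Rf : X -> A -> R) k : measurable_reward Rf ->
    tuple_measurable (fun x (t : K.-tuple A) => slate_values Rf x t k).
  exact: tuple_measurable_tnth.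
have mlnZ (Rf : X -> A -> R) : measurable_reward Rf ->
    tuple_measurable (fun x (t : K.-tuple A) =>
      ln (mnl_partition (slate_values Rf x t))).
  move=> mRf; apply: tuple_measurable_comp; first exact: measurable_ln.
  apply: tuple_measurable_sum => k.
  by apply: tuple_measurable_comp; [exact: measurable_expR|exact: mslate].
pose vp x (t : K.-tuple A) := slate_values Rp x t.
pose vq x (t : K.-tuple A) := slate_values Rq x t.
apply: (eq_tuple_measurable (h1 := fun x t => \sum_(k < K)
    expR (vp x t k - ln (mnl_partition (vp x t))) *
    (ln (mnl_partition (vq x t)) - vq x t k))); last first.
  by move=> x t; apply: eq_bigr => k _; rewrite mnl_probE.
apply: tuple_measurable_sum => k; apply: tuple_measurableM.
  apply: tuple_measurable_comp; first exact: measurable_expR.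
  by apply: tuple_measurableB; [exact: mslate|exact: mlnZ].
by apply: tuple_measurableB; [exact: mlnZ|exact: mslate].
Qed.

Definition slate_excess K (Rp Rq : X -> A -> R) x (t : K.-tuple A) : R :=
  cross_logloss (slate_values Rp x t) (slate_values Rq x t) -
  cross_logloss (slate_values Rp x t) (slate_values Rp x t).

Lemma slate_excess_ge0 K (Rp Rq : X -> A -> R) x (t : K.-tuple A) :
  0 <= slate_excess Rp Rq x t.
Proof.
case: K t => [|K] t; last exact: cross_logloss_excess_ge0 ord0.
by rewrite /slate_excess /cross_logloss !big_ord0 subrr.
Qed.

Section excess.
Variables (Rp Rq : X -> A -> R).
Hypotheses (mRp : measurable_reward Rp) (mRq : measurable_reward Rq).

Lemma tuple_measurable_slate_excess K : tuple_measurable (@slate_excess K Rp Rq).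
Proof. by apply: tuple_measurableB; exact: tuple_measurable_cross_logloss. Qed.

Lemma pop_lossE K :
  pop_loss K d0 (kfun pi0) Rp Rq = (pop_loss K d0 (kfun pi0) Rp Rp +
    \int[d0]_x prod_integral (pi0 x)
                 (fun t : K.-tuple A => (slate_excess Rp Rq x t)%:E))%E.
Proof.
have mself := tuple_measurable_cross_logloss K mRp mRp.
have self_ge0 x (t : K.-tuple A) := cross_logloss_self_ge0 (slate_values Rp x t).
have mexcess := tuple_measurable_slate_excess K.
rewrite /pop_loss -ge0_integralD //.
- apply: eq_integral => x _.
  rewrite -(prod_integralD pi0 self_ge0 (@slate_excess_ge0 K Rp Rq) mself mexcess).
  by congr prod_integral; apply/funext => t; rewrite /slate_excess addrC subrK.
- by move=> x _; apply: prod_integral_EFin_ge0 => t; exact: cross_logloss_self_ge0.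
- exact: (measurable_prod_integral pi0 self_ge0 mself).
- by move=> x _; apply: prod_integral_EFin_ge0 => t; exact: slate_excess_ge0.
- exact (measurable_prod_integral pi0 (@slate_excess_ge0 K Rp Rq) mexcess).
Qed.

Lemma pop_loss_self_fin_num K : pop_loss K d0 (kfun pi0) Rp Rp \is a fin_num.
Proof.
have mself := tuple_measurable_cross_logloss K mRp mRp.
have self_ge0 x (t : K.-tuple A) := cross_logloss_self_ge0 (slate_values Rp x t).
have self_le x (t : K.-tuple A) := cross_logloss_self_le (slate_values Rp x t).
have PI_ge0 x : (0 <= prod_integral (pi0 x) (fun t : K.-tuple A =>
    (cross_logloss (slate_values Rp x t) (slate_values Rp x t))%:E))%E.
  exact: prod_integral_EFin_ge0 (self_ge0 x).
rewrite ge0_fin_numE; last by apply: integral_ge0 => x _; exact: PI_ge0.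
apply: le_lt_trans (ltry K%:R).
apply: (@le_trans _ _ (\int[d0]_x cst K%:R%:E x)%E).
  apply: ge0_le_integral => //.
  - by move=> x _; exact: PI_ge0.
  - exact (measurable_prod_integral pi0 self_ge0 mself).
  - by move=> x _; exact (prod_integral_le pi0 self_ge0 self_le mself x).
rewrite integral_cst // -[leRHS]mule1.
by apply: lee_wpmul2l; [rewrite lee_fin|exact: probability_le1].
Qed.

Lemma pop_loss_eq_ae_excess0 K :
  pop_loss K d0 (kfun pi0) Rp Rq = pop_loss K d0 (kfun pi0) Rp Rp ->
  {ae d0, forall x, prod_integral (pi0 x)
                      (fun t : K.-tuple A => (slate_excess Rp Rq x t)%:E) = 0%E}.
Proof.
rewrite pop_lossE.
set L := pop_loss K _ _ Rp Rp; set E := (\int[d0]_x _)%E => loss_eq.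
have L_fin : L \is a fin_num by exact: pop_loss_self_fin_num.
apply: ge0_integral_eq0_ae.
- by move=> x; apply: prod_integral_EFin_ge0 => t; exact: slate_excess_ge0.
- exact (measurable_prod_integral pi0 (@slate_excess_ge0 K Rp Rq)
    (tuple_measurable_slate_excess K)).
- by rewrite -/E -(addeK E L_fin) (addeC E L) loss_eq subee.
Qed.

(* Fix a first action [a1] whose remaining integral vanishes; then almost every
   second action [a2] completes a zero-excess slate with [a1], which forces
   [Rq - Rp] to agree at [a1] and [a2]. *)
Lemma slate_excess_eq0_shift n x :
  prod_integral (pi0 x)
    (fun t : n.+2.-tuple A => (slate_excess Rp Rq x t)%:E) = 0%E ->
  exists c, {ae pi0 x, forall a, Rq x a - Rp x a = c}.
Proof.
move=> /(prod_integral_eq0_pair (@slate_excess_ge0 _ Rp Rq)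
          (tuple_measurable_slate_excess _)) [a1 ae_a2].
exists (Rq x a1 - Rp x a1); apply: filterS ae_a2 => a2 [t /eqP].
rewrite subr_eq0 => /eqP /(cross_logloss_excess_eq0 ord0).
by move=> /(_ (lift ord0 ord0) ord0); rewrite /slate_values !(tnth_nth a1).
Qed.

End excess.
End population_loss.

Section regret.
Context (R : realType) (dX : measure_display) (X : measurableType dX).
Context (dA' : measure_display) (A : measurableType dA').
Variables (S : X -> set A) (tie : X -> set A -> A).

Lemma eq_argmax_set (f g : X -> A -> R) x :
  (forall a, S x a -> f x a = g x a) -> argmax_set S f x = argmax_set S g x.
Proof.
move=> fg; apply/seteqP; split => a [Sa a_max]; split => // b Sb.
  by rewrite -!fg //; exact: a_max.
by rewrite !fg //; exact: a_max.
Qed.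

Lemma regret_eq0 (d0 : {measure set X -> \bar R}) (Rp Rq : X -> A -> R) :
  measurable_fun setT (fun xa : X * A => Rp xa.1 xa.2) ->
  measurable_fun setT (a_sel S tie Rp) -> measurable_fun setT (a_sel S tie Rq) ->
  {ae d0, forall x a, S x a -> Rq x a = Rp x a} -> regret d0 S tie Rp Rq = 0%E.
Proof.
move=> mRp msel_p msel_q eq_on_S.
have mval (sel : X -> A) : measurable_fun setT sel ->
    measurable_fun setT (fun x => Rp x (sel x)).
  move=> msel.
  exact (measurableT_comp mRp (measurable_fun_pair (@measurable_id _ X setT) msel)).
rewrite /regret (ae_eq_integral (cst 0%E)) ?integral0 //.
  by apply/measurable_EFinP; apply: measurable_funB; exact: mval.
apply: filterS eq_on_S => x eq_x _.
by rewrite /a_sel (eq_argmax_set eq_x) subrr.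
Qed.

End regret.

Theorem lemma2 (R : realType)
  (dX : measure_display) (X : measurableType dX)
  (dA' : measure_display) (A : measurableType dA')
  (dA : A -> A -> R)
  (d0 : probability X R)
  (pi0 : R.-pker X ~> A)
  (K : nat)
  (P : Type) (Rof : P -> X -> A -> R)
  (tie : X -> set A -> A) :
  is_metric dA -> separable_metric dA -> borel_for dA ->
  (2 <= K)%N ->
  (* each R_p is measurable and pi0-centered *)
  (forall p, measurable_fun setT (fun xa : X * A => Rof p xa.1 xa.2)) ->
  (forall p x, (pi0 x).-integrable setT (fun a => (Rof p x a)%:E)) ->
  (forall p x, (\int[pi0 x]_a (Rof p x a)%:E = 0)%E) ->
  (* a_R is a measurable selector of argmax_{S_x} R(x,.) *)
  (forall p, measurable_fun setT (a_sel (supp dA (kfun pi0)) tie (Rof p))) ->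
  (forall p, {ae d0, forall x, argmax_set (supp dA (kfun pi0)) (Rof p) x
                                (a_sel (supp dA (kfun pi0)) tie (Rof p) x)}) ->
  (* assumptions of the lemma *)
  compact_class (supp dA (kfun pi0)) Rof ->
  (forall q, {ae d0, forall x,
     cont_on_supp dA (supp dA (kfun pi0) x) (Rof q x)}) ->
  forall p q : P,
    pop_loss K d0 (kfun pi0) (Rof p) (Rof q) = pop_loss K d0 (kfun pi0) (Rof p) (Rof p) ->
    {ae d0, forall x, forall a, supp dA (kfun pi0) x a -> Rof q x a = Rof p x a} /\
    regret d0 (supp dA (kfun pi0)) tie (Rof p) (Rof q) = 0%E.
Proof.
move=> dA_metric dA_separable dA_borel K_ge2 mR R_int R_centered msel _ _ R_cont p q.
have [n ->] : exists n, K = n.+2 by case: K K_ge2 => [|[|n]] // _; exists n.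
move=> /(pop_loss_eq_ae_excess0 (mR p) (mR q)) excess0.
have eq_ae : {ae d0, forall x, {ae pi0 x, forall a, Rof q x a = Rof p x a}}.
  apply: filterS excess0 => x /(slate_excess_eq0_shift (mR p) (mR q)) [c shift].
  apply: ae_eq_of_shift_integral (prob_kernel x) (R_int q x) (R_int p x) _ shift.
  by rewrite !R_centered.
have eq_on_supp :
    {ae d0, forall x a, supp dA (kfun pi0) x a -> Rof q x a = Rof p x a}.
  apply: filterS2 (filterI (R_cont q) (R_cont p)) eq_ae => x [cont_q cont_p].
  exact (eq_on_support dA_metric dA_separable dA_borel cont_q cont_p).
by split=> //; exact: regret_eq0 (mR p) (msel p) (msel q) eq_on_supp.
Qed.
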